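(* Let $\Lambda$ be a strongly connected finite $k$-graph. Suppose $m,n\in\mathbb{N}^k$ with $m-n\in\operatorname{Per}\Lambda$ and $\mu\in\Lambda^m$. Let $p:=(m\vee n)-m$ and $q:=(m\vee n)-n$. Then \[\Lambda^{\min}(\theta_{m,n}(\mu),\mu)=\{(\alpha,\theta_{q,p}(\alpha)):\alpha\in s(\mu)\Lambda^q\}.\]
   Context: A $k$-graph is a countable category $\Lambda$ with a functor $d:\Lambda\to\mathbb{N}^k$ such that whenever $d(\lambda)=m+n$ there are unique $\mu,\nu$ with $d(\mu)=m$, $d(\nu)=n$, $\lambda=\mu\nu$. $\Lambda^n=d^{-1}(n)$, $\Lambda^0$ = vertices, $r,s$ range and source, $v\Lambda^q=\{\lambda\in\Lambda^q:r(\lambda)=v\}$. Standing convention: $\Lambda^{e_i}\neq\emptyset$ for each $i$. Finite: each $\Lambda^n$ finite; strongly connected: $v\Lambda w\neq\emptyset$ for all vertices. $\Lambda^{\min}(\mu,\nu)=\{(\alpha,\beta):\mu\alpha=\nu\beta,\ d(\mu\alpha)=d(\mu)\vee d(\nu)\}$. Infinite paths: degree-preserving functors $x:\Omega_k\to\Lambda$, $\Omega_k=\{(m,n)\in\mathbb{N}^k\times\mathbb{N}^k:m\le n\}$ with $r(m,n)=(m,m)$, $s(m,n)=(n,n)$, $(m,n)(n,p)=(m,p)$, $d(m,n)=n-m$; $\Lambda^\infty$ their set; $\sigma^n(x)(p,q)=x(n+p,n+q)$; $\lambda x$ concatenation with $(\lambda x)(0,d(\lambda))=\lambda$, $\sigma^{d(\lambda)}(\lambda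 x)=x$; $Z(\lambda)=\{x:x(0,d(\lambda))=\lambda\}$. $\operatorname{Per}\Lambda=\{m-n:\sigma^m(x)=\sigma^n(x)\ \forall x\in\Lambda^\infty\}$. For $a,b\in\mathbb{N}^k$ with $a-b\in\operatorname{Per}\Lambda$ (then $\sigma^a=\sigma^b$ on $\Lambda^\infty$) and $\mu\in\Lambda^a$, $\theta_{a,b}(\mu)$ is the unique element of $\Lambda^b$ with $\mu x=\theta_{a,b}(\mu)x$ for all $x\in Z(s(\mu))$. *)

From mathcomp Require Import all_boot all_order all_algebra.
Set Implicit Arguments.
Unset Strict Implicit.
Unset Printing Implicit Defensive.

Definition NK (k : nat) := {ffun 'I_k -> nat}.

Section NKops.
Variable k : nat.
Definition zerov : NK k := [ffun => 0%N].
Definition addv (m n : NK k) : NK k := [ffun i => (m i + n i)%N].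
(* truncated subtraction; only used when n <= m pointwise *)
Definition subv (m n : NK k) : NK k := [ffun i => (m i - n i)%N].
Definition joinv (m n : NK k) : NK k := [ffun i => maxn (m i) (n i)].
Definition lev (m n : NK k) : bool := [forall i, (m i <= n i)%N].
Definition unitv (i : 'I_k) : NK k := [ffun j => nat_of_bool (j == i)].
Definition diffZ (m n : NK k) : {ffun 'I_k -> int} :=
  [ffun i => ((m i)%:Z - (n i)%:Z)%R].
End NKops.

(* A k-graph: a countable category (composition given as a total function,
   whose values matter only on composable pairs) with a degree functor
   d : Lambda -> N^k satisfying the unique factorisation property. *)
Record kgraph (k : nat) := KGraph {
  Obj : Type;
  Mor : countType;
  Obj_countable : exists f : Obj -> nat, injective f;
  rg : Mor -> Obj;
  sc : Mor -> Obj;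
  idm : Obj -> Mor;
  comp : Mor -> Mor -> Mor;
  deg : Mor -> NK k;
  rg_idm : forall v, rg (idm v) = v;
  sc_idm : forall v, sc (idm v) = v;
  rg_comp : forall mu nu, sc mu = rg nu -> rg (comp mu nu) = rg mu;
  sc_comp : forall mu nu, sc mu = rg nu -> sc (comp mu nu) = sc nu;
  comp_idl : forall mu, comp (idm (rg mu)) mu = mu;
  comp_idr : forall mu, comp mu (idm (sc mu)) = mu;
  compA : forall mu nu la, sc mu = rg nu -> sc nu = rg la ->
            comp mu (comp nu la) = comp (comp mu nu) la;
  deg_idm : forall v, deg (idm v) = zerov k;
  deg_comp : forall mu nu, sc mu = rg nu -> deg (comp mu nu) = addv (deg mu) (deg nu);
  factorisation : forall la (m n : NK k), deg la = addv m n ->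
     exists mu nu, [/\ deg mu = m, deg nu = n, sc mu = rg nu & la = comp mu nu] /\
       forall mu' nu', deg mu' = m -> deg nu' = n -> sc mu' = rg nu' ->
          la = comp mu' nu' -> mu' = mu /\ nu' = nu
}.

Arguments rg {k L} _ : rename.
Arguments sc {k L} _ : rename.
Arguments idm {k L} _ : rename.
Arguments comp {k L} _ _ : rename.
Arguments deg {k L} _ : rename.

Section KGraphNotions.
Variables (k : nat) (L : kgraph k).

Definition kg_finite : Prop :=
  forall n : NK k, exists s : seq (Mor L), forall la, deg la = n -> la \in s.

Definition strongly_connected : Prop :=
  forall v w : Obj L, exists la : Mor L, rg la = v /\ sc la = w.

(* standing convention: Lambda^{e_i} nonempty *)
Definition edges_nonempty : Prop :=
  forall i : 'I_k, exists la : Mor L, deg la = unitv i.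

(* Infinite paths: degree-preserving functors Omega_k -> Lambda, given by
   their values x m n = x(m,n) on morphisms (m,n), m <= n (values off this
   domain are irrelevant). The object m is sent to the vertex rg (x m m). *)
Definition is_infpath (x : NK k -> NK k -> Mor L) : Prop :=
  [/\ (forall m, x m m = idm (rg (x m m))),
      (forall m n, lev m n -> rg (x m n) = rg (x m m) /\ sc (x m n) = rg (x n n)),
      (forall m n p, lev m n -> lev n p -> x m p = comp (x m n) (x n p)) &
      (forall m n, lev m n -> deg (x m n) = subv n m)].

Definition path_eq (x y : NK k -> NK k -> Mor L) : Prop :=
  forall m n, lev m n -> x m n = y m n.

Definition shift (a : NK k) (x : NK k -> NK k -> Mor L) :=
  fun p q => x (addv a p) (addv a q).

Definition is_concat (la : Mor L) (x y : NK k -> NK k -> Mor L) : Prop :=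
  [/\ is_infpath y, y (zerov k) (deg la) = la & path_eq (shift (deg la) y) x].

Definition inPer (a b : NK k) : Prop :=
  exists m n : NK k, diffZ m n = diffZ a b /\
    forall x, is_infpath x -> path_eq (shift m x) (shift n x).

Definition is_theta (a b : NK k) (mu nu : Mor L) : Prop :=
  [/\ deg mu = a, deg nu = b &
      forall x, is_infpath x -> x (zerov k) (zerov k) = idm (sc mu) ->
        forall y, is_concat mu x y <-> is_concat nu x y].

Definition in_Lmin (mu nu al be : Mor L) : Prop :=
  [/\ sc mu = rg al, sc nu = rg be, comp mu al = comp nu be &
      deg (comp mu al) = joinv (deg mu) (deg nu)].

End KGraphNotions.

From Pilot Require Import Defs.
From mathcomp Require Import all_boot all_order all_algebra zify.
From Stdlib Require Import ClassicalEpsilon.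
Set Implicit Arguments.
Unset Strict Implicit.
Unset Printing Implicit Defensive.

(** If [θ(μ) α = μ β] with [d(α) = q], then for every infinite path [x] from
    [s(α)] we get [μ (α x) = θ(μ) (α x) = μ (β x)], and cancelling [μ] gives
    [α x = β x]: so [β = θ_{q,p}(α)].  Conversely, if [β = θ_{q,p}(α)] then
    [θ(μ) α x = μ α x = μ β x] for every such [x], and reading off the initial
    segment of degree [m ∨ n] gives [θ(μ) α = μ β].  What remains is to realise
    infinite paths concretely: every vertex receives one (strong connectivity
    together with [Λ^{e_i} ≠ ∅]), and every path can be prepended to one. *)

Section KGraph.
Variables (k : nat) (L : kgraph k).
Local Notation cmp := (@Defs.comp k L).
Local Notation zv := (zerov k).
Local Notation addv := (@Defs.addv k).
Local Notation subv := (@Defs.subv k).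
Local Notation joinv := (@Defs.joinv k).
Local Notation lev := (@Defs.lev k).
Local Notation path := (NK k -> NK k -> Mor L).
Implicit Types (la mu nu al be : Mor L) (a b c d : NK k) (v : Obj L).

Lemma levP a b : reflect (forall i, a i <= b i) (lev a b).
Proof. exact: (iffP forallP). Qed.

(* Unlike [ffunP], this states pointwise equality with the canonical
   [fun_of_fin] instance, so that [lia] sees both sides' [a i] as one atom. *)
Lemma nkP a b : (forall i, a i = b i) -> a = b.
Proof. by move=> h; apply/ffunP. Qed.

Local Ltac nk_ext := apply: nkP => i; rewrite /zerov !ffunE; lia.
Local Ltac nk_le := apply/levP => i; rewrite /zerov ?ffunE; lia.

Lemma addvA a b c : addv a (addv b c) = addv (addv a b) c. Proof. nk_ext. Qed.
Lemma addv0 a : addv a zv = a. Proof. nk_ext. Qed.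
Lemma addKv a b : subv (addv a b) a = b. Proof. nk_ext. Qed.
Lemma subvv a : subv a a = zv. Proof. nk_ext. Qed.
Lemma subv0 a : subv a zv = a. Proof. nk_ext. Qed.
Lemma joinvC a b : joinv a b = joinv b a. Proof. nk_ext. Qed.

Lemma addvI a : injective (addv a).
Proof. move=> b c /ffunP h; apply: nkP => i; move: (h i); rewrite !ffunE; lia. Qed.

Lemma lev0v a : lev zv a. Proof. nk_le. Qed.
Lemma levv a : lev a a. Proof. nk_le. Qed.
Lemma lev_addr a b : lev a (addv a b). Proof. nk_le. Qed.
Lemma lev_addl a b : lev b (addv a b). Proof. nk_le. Qed.
Lemma lev_joinl a b : lev a (joinv a b). Proof. nk_le. Qed.
Lemma lev_joinr a b : lev b (joinv a b). Proof. nk_le. Qed.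

Lemma lev_trans a b c : lev a b -> lev b c -> lev a c.
Proof. move=> /levP h1 /levP h2; apply/levP => i; exact: leq_trans (h1 i) (h2 i). Qed.

Lemma lev_add2l d a b : lev a b -> lev (addv d a) (addv d b).
Proof. move=> /levP h; apply/levP => i; move: (h i); rewrite !ffunE; lia. Qed.

Lemma lev_sub2r d a b : lev a b -> lev (subv a d) (subv b d).
Proof. move=> /levP h; apply/levP => i; move: (h i); rewrite !ffunE; lia. Qed.

Lemma subvK a b : lev a b -> addv a (subv b a) = b.
Proof. move=> /levP h; apply: nkP => i; move: (h i); rewrite !ffunE; lia. Qed.

Lemma factorisation_uniq mu nu mu' nu' : sc mu = rg nu -> sc mu' = rg nu' ->
  deg mu = deg mu' -> cmp mu nu = cmp mu' nu' -> mu = mu' /\ nu = nu'.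
Proof.
move=> s s' dmu e.
have dnu : deg nu = deg nu' by apply: (@addvI (deg mu)); rewrite -deg_comp // e deg_comp // dmu.
case: (factorisation (deg_comp s)) => mu0 [nu0 [_ uniq]].
by case: (uniq mu nu) => // -> ->; case: (uniq mu' nu') => // ->.
Qed.

Lemma deg_eq0_idm la : deg la = zv -> la = idm (rg la).
Proof.
move=> d0; have e : cmp (idm (rg la)) la = cmp la (idm (sc la)) by rewrite comp_idl comp_idr.
by case: (factorisation_uniq _ _ _ e) => [||| <-]; rewrite ?sc_idm ?rg_idm ?deg_idm ?d0.
Qed.

Definition splits la a (pr : Mor L * Mor L) :=
  [/\ deg pr.1 = a, sc pr.1 = rg pr.2 & la = cmp pr.1 pr.2].

Definition split_at la a := epsilon (inhabits (la, la)) (splits la a).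

Lemma split_atP la a : lev a (deg la) -> splits la a (split_at la a).
Proof.
move=> le_a; apply: (epsilon_spec (inhabits (la, la)) (splits la a)).
have /factorisation[mu [nu [[dmu _ s e] _]]] : deg la = addv a (subv (deg la) a).
  by rewrite subvK.
by exists (mu, nu).
Qed.

Lemma split_at_comp mu nu : sc mu = rg nu -> split_at (cmp mu nu) (deg mu) = (mu, nu).
Proof.
move=> s; have /split_atP[d s' e] : lev (deg mu) (deg (cmp mu nu)).
  by rewrite deg_comp ?lev_addr.
case: (factorisation_uniq s' s d (esym e)).
by case: (split_at _ _) => /= ? ? -> ->.
Qed.

Definition prefix la a := (split_at la a).1.

Lemma prefix_deg la : prefix la (deg la) = la.
Proof.
have := @split_at_comp la (idm (sc la)); rewrite rg_idm comp_idr => e.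
by rewrite /prefix e.
Qed.

Lemma rg_prefix la a : lev a (deg la) -> rg (prefix la a) = rg la.
Proof. by case/split_atP => _ s e; rewrite {2}e rg_comp. Qed.

Lemma prefix0 la : prefix la zv = idm (rg la).
Proof.
have le0 := lev0v (deg la).
by case: (split_atP le0) => d _ _; rewrite /prefix (deg_eq0_idm d) -/(prefix la zv) rg_prefix.
Qed.

Lemma infpath_sc (x : path) a b c : is_infpath x -> lev a b -> lev b c ->
  sc (x a b) = rg (x b c).
Proof. by case=> _ ends _ _ lab lbc; rewrite (ends _ _ lab).2 (ends _ _ lbc).1. Qed.

Lemma infpath_of_prefixes (G : NK k -> Mor L) :
  (forall a, deg (G a) = a) ->
  (forall a b, lev a b -> exists r, sc (G a) = rg r /\ G b = cmp (G a) r) ->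
  exists x : path, is_infpath x /\ forall a, x zv a = G a.
Proof.
move=> dG extG; pose x a b := (split_at (G b) a).2.
have xP a b : lev a b -> sc (G a) = rg (x a b) /\ G b = cmp (G a) (x a b).
  move=> lab; case: (extG _ _ lab) => r [s e].
  have split_Gb : split_at (G b) a = (G a, r) by move: (split_at_comp s); rewrite dG -e.
  by rewrite /x split_Gb.
have deg_x a b : lev a b -> deg (x a b) = subv b a.
  move=> lab; case: (xP _ _ lab) => s e; apply: (@addvI a).
  by rewrite subvK // -{1}(dG a) -deg_comp // -e dG.
have rg_x a b : lev a b -> rg (x a b) = sc (G a) by move=> /xP[].
have sc_x a b : lev a b -> sc (x a b) = sc (G b).
  by move=> /xP[s e]; rewrite e sc_comp.
exists x; split; first split.
- by move=> a; apply: deg_eq0_idm; rewrite deg_x ?levv ?subvv.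
- by move=> a b lab; rewrite !rg_x ?levv // sc_x.
- move=> a b c lab lbc; have lac := lev_trans lab lbc.
  have s : sc (x a b) = rg (x b c) by rewrite sc_x // rg_x.
  have [sa ea] := xP _ _ lac; have [sb eb] := xP _ _ lab; have [_ ec] := xP _ _ lbc.
  have : cmp (G a) (x a c) = cmp (G a) (cmp (x a b) (x b c)).
    by rewrite -ea ec eb Defs.compA.
  by case/factorisation_uniq => //; rewrite rg_comp.
- exact: deg_x.
- move=> a; have [s e] := xP _ _ (lev0v a).
  have e0 := deg_eq0_idm (dG zv).
  have s0 : sc (G zv) = rg (G zv) by rewrite {1}e0 sc_idm.
  by rewrite e e0 -s0 s comp_idl.
Qed.

Lemma infpath_of_chain (c : NK k -> Mor L) :
  (forall a, lev a (deg (c a))) ->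
  (forall a b, lev a b -> exists r, sc (c a) = rg r /\ c b = cmp (c a) r) ->
  exists x : path, is_infpath x /\ forall a, x zv a = prefix (c a) a.
Proof.
move=> le_c ext_c; apply: infpath_of_prefixes => [a | a b lab].
  by case: (split_atP (le_c a)).
have [r [sr er]] := ext_c _ _ lab.
have [da sa ea] := split_atP (le_c a).
have [db sb eb] := split_atP (le_c b).
have /split_atP[dt st et] : lev a (deg (split_at (c b) b).1) by rewrite db.
set t := split_at _ a in dt st et.
exists t.2; rewrite /prefix.
have s2 : sc t.2 = rg (split_at (c b) b).2 by rewrite -(sc_comp st) -et.
have s3 : sc (split_at (c a) a).2 = rg r by rewrite -(sc_comp sa) -ea.
have : cmp t.1 (cmp t.2 (split_at (c b) b).2) =
       cmp (split_at (c a) a).1 (cmp (split_at (c a) a).2 r).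
  by rewrite Defs.compA // -et -eb er {1}ea Defs.compA.
case/factorisation_uniq; rewrite ?rg_comp ?dt ?da // => e1 _.
by rewrite -e1 {1}et.
Qed.

Section InfinitePathsExist.
Hypothesis edges : edges_nonempty L.
Hypothesis connected : strongly_connected L.

Definition onesv : NK k := [ffun => 1].

Lemma exists_path_deg_ge1 v : exists la, rg la = v /\ lev onesv (deg la).
Proof.
suff /(_ k)[la [r_la deg_la]] :
    forall j, exists la, rg la = v /\ forall i : 'I_k, i < j -> 0 < deg la i.
  by exists la; split => //; apply/levP => i; rewrite ffunE; apply: deg_la.
elim=> [|j [la [r_la deg_la]]]; first by exists (idm v); rewrite rg_idm.
case: (ltnP j k) => [lt_jk | le_kj]; last first.
  by exists la; split => // i lt_ij; apply: deg_la; rewrite (leq_trans _ le_kj).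
have [ej dej] := edges (Ordinal lt_jk).
have [rho [r_rho s_rho]] := connected (sc la) (rg ej).
have s : sc la = rg (cmp rho ej) by rewrite rg_comp.
exists (cmp la (cmp rho ej)); split; first by rewrite rg_comp.
move=> i lt_ij; rewrite !(deg_comp, ffunE) // dej ffunE.
have [lt_i | ge_i] := ltnP i j; first by rewrite (leq_trans (deg_la i lt_i)) ?leq_addr.
have -> : i == Ordinal lt_jk by apply/eqP/val_inj => /=; lia.
by rewrite !addnS.
Qed.

Definition long_path v :=
  epsilon (inhabits (idm v)) (fun la => rg la = v /\ lev onesv (deg la)).

Lemma long_pathP v : rg (long_path v) = v /\ lev onesv (deg (long_path v)).
Proof. exact: (epsilon_spec _ _ (exists_path_deg_ge1 v)). Qed.

Fixpoint tower v j :=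
  if j is j'.+1 then cmp (tower v j') (long_path (sc (tower v j'))) else idm v.

Lemma tower_composable v j : sc (tower v j) = rg (long_path (sc (tower v j))).
Proof. by rewrite (long_pathP _).1. Qed.

Lemma rg_tower v j : rg (tower v j) = v.
Proof. by elim: j => [|j IH] /=; rewrite ?rg_idm // (rg_comp (tower_composable _ _)). Qed.

Lemma tower_deg v j i : j <= deg (tower v j) i.
Proof.
elim: j => [|j IH] //=; rewrite (deg_comp (tower_composable _ _)) ffunE.
have /levP/(_ i) := (long_pathP (sc (tower v j))).2; rewrite ffunE.
by move=> ge1; rewrite -addn1 leq_add.
Qed.

Lemma tower_extends v j j' : j <= j' ->
  exists r, sc (tower v j) = rg r /\ tower v j' = cmp (tower v j) r.
Proof.
move=> /subnK <-; elim: (j' - j) => [|t [r [s e]]].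
  by exists (idm (sc (tower v j))); rewrite rg_idm comp_idr.
have s' : sc r = rg (long_path (sc (tower v (t + j)))).
  by rewrite -(sc_comp s) -e; apply: tower_composable.
exists (cmp r (long_path (sc (tower v (t + j))))); split; first by rewrite rg_comp.
by rewrite addSn /= {1}e Defs.compA // -e.
Qed.

(* The paths [tower v (Σ_i a_i)], of degree at least [a], form a chain whose
   prefixes of degree [a] build the infinite path. *)
Lemma exists_infpath v : exists x : path, is_infpath x /\ x zv zv = idm v.
Proof.
have [a | a b lab | x [x_path x_pref]] :=
  @infpath_of_chain (fun a => tower v (\sum_(i < k) a i)).
- apply/levP => i; apply: leq_trans (tower_deg _ _ i).
  by rewrite (bigD1 i) //= leq_addr.
- by apply: tower_extends; apply: leq_sum => i _; move/levP: lab.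
- by exists x; rewrite x_pref prefix0 rg_tower.
Qed.

End InfinitePathsExist.

Lemma concat_exists la (x : path) : is_infpath x -> x zv zv = idm (sc la) ->
  exists y, is_concat la x y.
Proof.
move=> x_path x0; case: (x_path) => _ ends x_comp x_deg.
have rg_x a : sc la = rg (x zv a) by rewrite (ends _ _ (lev0v a)).1 x0 rg_idm.
have deg_x a : deg (x zv a) = a by rewrite x_deg ?subv0 ?lev0v.
have [a | a b lab | y [y_path y_pref]] :=
  @infpath_of_chain (fun a => cmp la (x zv (subv a (deg la)))).
- by rewrite deg_comp // deg_x; apply/levP => i; rewrite !ffunE; lia.
- have lab' := lev_sub2r (deg la) lab.
  have s := infpath_sc x_path (lev0v _) lab'.
  exists (x (subv a (deg la)) (subv b (deg la))); split; first by rewrite sc_comp.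
  by rewrite (x_comp _ (subv a (deg la))) ?lev0v ?Defs.compA.
- have y_la b : y zv (addv (deg la) b) = cmp la (x zv b).
    rewrite y_pref addKv.
    have -> : addv (deg la) b = deg (cmp la (x zv b)) by rewrite deg_comp // deg_x.
    exact: prefix_deg.
  exists y; split => //; first by have := y_la zv; rewrite addv0 x0 comp_idr.
  move=> a b lab; rewrite /shift.
  have l1 := lev0v (addv (deg la) a); have l2 := lev_add2l (deg la) lab.
  have s := infpath_sc x_path (lev0v a) lab.
  have : cmp (y zv (addv (deg la) a)) (y (addv (deg la) a) (addv (deg la) b)) =
         cmp (y zv (addv (deg la) a)) (x a b).
    case: (y_path) => _ _ y_comp _.
    by rewrite -y_comp // !y_la (x_comp _ a) ?lev0v // Defs.compA.
  case/factorisation_uniq => //; first exact: infpath_sc y_path l1 l2.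
  by rewrite y_la sc_comp.
Qed.

Lemma concat_src la (x y : path) : is_concat la x y -> x zv zv = idm (sc la).
Proof.
case=> y_path y_pref y_shift.
have := y_shift zv zv (levv zv); rewrite /shift addv0 => <-.
case: (y_path) => y_id _ _ _.
by rewrite {1}y_id -(infpath_sc y_path (lev0v _) (levv _)) y_pref.
Qed.

Lemma concat_rg la (x y : path) : is_concat la x y -> y zv zv = idm (rg la).
Proof.
case=> y_path y_pref _; case: (y_path) => y_id ends _ _.
by rewrite {1}y_id -(ends _ _ (lev0v (deg la))).1 y_pref.
Qed.

Lemma concat_comp mu la (x y w : path) : sc mu = rg la ->
  is_concat la x y -> is_concat mu y w -> is_concat (cmp mu la) x w.
Proof.
move=> s [y_path y_pref y_shift] [w_path w_pref w_shift]; split => //.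
- case: (w_path) => _ _ w_comp _.
  rewrite deg_comp // (w_comp _ (deg mu)) ?lev0v ?lev_addr // w_pref.
  by have := w_shift zv (deg la) (lev0v _); rewrite /shift addv0 => ->; rewrite y_pref.
- move=> a b lab; rewrite /shift deg_comp // -!addvA.
  by have := w_shift _ _ (lev_add2l (deg la) lab); rewrite /shift => ->; apply: y_shift.
Qed.

Lemma infpath_split_eq (y y' : path) b c : is_infpath y -> is_infpath y' ->
  lev b c -> y zv c = y' zv c -> y zv b = y' zv b /\ y b c = y' b c.
Proof.
move=> y_path y'_path lbc.
case: (y_path) (y'_path) => _ _ y_comp y_deg [_ _ y'_comp y'_deg].
rewrite (y_comp zv b c) ?(y'_comp zv b c) ?lev0v //.
apply: factorisation_uniq; rewrite ?(infpath_sc _ (lev0v _) lbc) //.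
by rewrite y_deg ?y'_deg ?lev0v.
Qed.

Lemma infpath_eq_below (y y' : path) a b c : is_infpath y -> is_infpath y' ->
  lev a b -> lev b c -> y zv c = y' zv c -> y a b = y' a b.
Proof.
move=> y_path y'_path lab lbc /(infpath_split_eq y_path y'_path lbc)[e _].
exact: (infpath_split_eq y_path y'_path lab e).2.
Qed.

Lemma concat_uniq la (x y y' : path) :
  is_concat la x y -> is_concat la x y' -> path_eq y y'.
Proof.
move=> [y_path y_pref y_shift] [y'_path y'_pref y'_shift] a b lab.
apply: (infpath_eq_below y_path y'_path lab (lev_addl (deg la) b)).
case: (y_path) (y'_path) => _ _ y_comp _ [_ _ y'_comp _].
have := y_shift zv b (lev0v b); have := y'_shift zv b (lev0v b); rewrite /shift addv0.
rewrite (y_comp zv (deg la) (addv (deg la) b)) ?(y'_comp zv (deg la) (addv (deg la) b));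
  by rewrite ?lev0v ?lev_addr // y_pref y'_pref => -> ->.
Qed.

Lemma concat_cancel mu (y y' w w' : path) :
  is_concat mu y w -> is_concat mu y' w' -> path_eq w w' -> path_eq y y'.
Proof.
move=> [_ _ w_shift] [_ _ w'_shift] e a b lab.
by rewrite -w_shift // -w'_shift // /shift e ?lev_add2l.
Qed.

Lemma concat_path_eq la (x y y' : path) : is_infpath y' ->
  is_concat la x y -> path_eq y y' -> is_concat la x y'.
Proof.
move=> y'_path [_ y_pref y_shift] e; split => //; first by rewrite -e ?lev0v.
by move=> a b lab; rewrite /shift -e ?lev_add2l //; apply: y_shift.
Qed.

Lemma concat_equiv la la' (x y y' : path) :
  is_concat la x y -> is_concat la' x y' -> path_eq y y' ->
  forall z : path, is_concat la x z <-> is_concat la' x z.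
Proof.
move=> y_la y'_la' e z; split => z_concat; have [z_path _ _] := z_concat.
- apply: concat_path_eq y'_la' _ => // a b lab.
  by rewrite -e // (concat_uniq y_la z_concat).
- apply: concat_path_eq y_la _ => // a b lab.
  by rewrite e // (concat_uniq y'_la' z_concat).
Qed.

Lemma in_Lmin_deg mu nu al be : in_Lmin mu nu al be ->
  deg al = subv (joinv (deg mu) (deg nu)) (deg mu) /\
  deg be = subv (joinv (deg mu) (deg nu)) (deg nu).
Proof.
by case=> s_al s_be e <-; rewrite {2}e !deg_comp // !addKv.
Qed.

Section Theta.
Hypothesis edges : edges_nonempty L.
Hypothesis connected : strongly_connected L.

Lemma theta_ends a b la nu : is_theta a b la nu -> sc nu = sc la /\ rg nu = rg la.
Proof.
case=> _ _ theta_la.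
have [x [x_path x0]] := exists_infpath edges connected (sc la).
have [y y_la] := concat_exists x_path x0.
have y_nu := (theta_la x x_path x0 y).1 y_la.
split; first by have := concat_src y_nu; rewrite x0 => /(congr1 sc); rewrite !sc_idm.
by have := concat_rg y_nu; rewrite (concat_rg y_la) => /(congr1 rg); rewrite !rg_idm.
Qed.

Lemma is_theta_of_comp_eq m n a b mu thmu al be : is_theta m n mu thmu ->
  sc thmu = rg al -> sc mu = rg be -> cmp thmu al = cmp mu be ->
  deg al = a -> deg be = b -> is_theta a b al be.
Proof.
move=> th_mu s_al s_be e deg_al deg_be; split => // x x_path x0.
have [sc_thmu _] := theta_ends th_mu; have [_ _ theta_mu] := th_mu.
have x0' : x zv zv = idm (sc be) by rewrite x0 -(sc_comp s_al) e sc_comp.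
have [y y_al] := concat_exists x_path x0.
have [y' y'_be] := concat_exists x_path x0'.
have [y_path _ _] := y_al; have [y'_path _ _] := y'_be.
have y0 : y zv zv = idm (sc mu) by rewrite (concat_rg y_al) -s_al sc_thmu.
have y'0 : y' zv zv = idm (sc mu) by rewrite (concat_rg y'_be) -s_be.
have [w w_mu] := concat_exists y_path y0.
have [w' w'_mu] := concat_exists y'_path y'0.
have w_thmu := (theta_mu y y_path y0 w).1 w_mu.
have w_w' : path_eq w w'.
  apply: (concat_uniq (concat_comp s_al y_al w_thmu)).
  by rewrite e; apply: concat_comp y'_be w'_mu.
exact: concat_equiv y_al y'_be (concat_cancel w_mu w'_mu w_w').
Qed.

Lemma comp_eq_of_is_theta m n a b mu thmu al be :
  is_theta m n mu thmu -> is_theta a b al be -> rg al = sc mu ->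
  addv n a = addv m b -> cmp thmu al = cmp mu be.
Proof.
move=> th_mu th_al rg_al degs.
have [sc_thmu _] := theta_ends th_mu; have [_ rg_be] := theta_ends th_al.
have [deg_mu deg_thmu theta_mu] := th_mu; have [deg_al deg_be theta_al] := th_al.
have s_al : sc thmu = rg al by rewrite sc_thmu rg_al.
have s_be : sc mu = rg be by rewrite rg_be rg_al.
have [x [x_path x0]] := exists_infpath edges connected (sc al).
have [y y_al] := concat_exists x_path x0.
have y_be := (theta_al x x_path x0 y).1 y_al.
have [y_path _ _] := y_al.
have y0 : y zv zv = idm (sc mu) by rewrite (concat_rg y_al) rg_al.
have [w w_mu] := concat_exists y_path y0.
have w_thmu := (theta_mu y y_path y0 w).1 w_mu.
have [_ <- _] := concat_comp s_al y_al w_thmu.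
have [_ <- _] := concat_comp s_be y_be w_mu.
by rewrite !deg_comp // deg_mu deg_thmu deg_al deg_be degs.
Qed.

End Theta.

End KGraph.

Theorem corollary5p3 (k : nat) (L : kgraph k)
  (Hedges : edges_nonempty L) (Hfin : kg_finite L) (Hsc : strongly_connected L)
  (m n : NK k) (Hper : inPer L m n) (mu : Mor L) (Hmu : deg mu = m)
  (thmu : Mor L) (Hth : is_theta m n mu thmu) :
  let p := subv (joinv m n) m in
  let q := subv (joinv m n) n in
  forall al be : Mor L,
    in_Lmin thmu mu al be <->
    (rg al = sc mu /\ deg al = q /\ is_theta q p al be).
Proof.
(* Finiteness and [m - n ∈ Per Λ] only serve to make θ_{m,n}(μ) exist; here
   it is given as [thmu]. *)
move=> p q al be.
have [_ deg_thmu _] := Hth.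
have [sc_thmu _] := theta_ends Hedges Hsc Hth.
split.
- move=> Lmin_al_be; have [s_al s_be e _] := Lmin_al_be.
  have [] := in_Lmin_deg Lmin_al_be; rewrite deg_thmu Hmu joinvC => deg_al deg_be.
  split; first by rewrite -s_al sc_thmu.
  by split => //; apply: is_theta_of_comp_eq Hth s_al s_be e deg_al deg_be.
- move=> [rg_al [deg_al th_al]].
  have [_ deg_be _] := th_al; have [_ rg_be] := theta_ends Hedges Hsc th_al.
  have degs : Defs.addv n q = Defs.addv m p by rewrite !subvK ?lev_joinl ?lev_joinr.
  have s_al : sc thmu = rg al by rewrite sc_thmu rg_al.
  split; rewrite ?rg_be //.
  + exact: comp_eq_of_is_theta Hth th_al rg_al degs.
  + by rewrite deg_comp // deg_thmu Hmu deg_al subvK ?lev_joinr // joinvC.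
Qed.
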